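(* Let $\varepsilon>0$ be such that $1/\varepsilon\ge 3$ is an integer, and let $I$ be an input of offline Ordered Open End Bin Packing with $n$ items. Let $\mathrm{OPT}'$ be a feasible solution for $I$, of cost $\mathrm{opt}'$, in which every exceeding item has size at least $\varepsilon^2$. Then the minimum cost $\mathrm{opt}_{nice}$ of a nice solution for $I$ satisfies $\mathrm{opt}_{nice}\le (1+\varepsilon)\,\mathrm{opt}'+\frac1\varepsilon$ (in particular, a nice solution exists).
   Context: Ordered Open End Bin Packing (offline): items $1,\dots,n$ with sizes in $(0,1]$ are given as a sequence; a feasible solution partitions the items into bins so that in every bin, the total size of all items except the item of maximum index is strictly below $1$. Cost = number of bins. For a bin whose total size is at least $1$, its exceeding item is its item of maximum index; a bin of total size strictly below $1$ has no exceeding item. A feasible solution $S$ has a certificate $(e_0,e_1,\dots,e_{1/\varepsilon})$ if (1) $0=e_0<e_1\le e_2\le\dots\le e_{1/\varepsilon}=n$ and $e_1,\dots,e_{1/\varepsilon-1}$ are integers, and (2) for every bin $B$ of $S$, either the total size of $B$ is strictly below $1$, or there is an integer $i$ such that the exceeding item of $B$ has index strictly larger than $e_i$ and all other items of $B$ have indices at most $e_i$. A feasible solution is nice if every exceeding item of its bins has size at least $\varepsilon^2$ and it has some certificate. $\mathrm{opt}_{nice}$ denotes the minimum cost among nice solutions. *)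

(* Items 1..n are represented by 'I_n, the ordinal j standing
   for the item of index j+1. A solution is a partition of the item set into
   bins (nonempty, pairwise disjoint sets covering all items). *)
From HB Require Import structures.
From mathcomp Require Import all_boot all_order all_algebra.
Set Implicit Arguments.
Unset Strict Implicit.
Unset Printing Implicit Defensive.
Import Order.TTheory GRing.Theory Num.Theory.
Local Open Scope ring_scope.

Section OOEBP.
Variables (R : realFieldType) (n : nat).

Definition is_max_item (B : {set 'I_n}) (j : 'I_n) : bool :=
  (j \in B) && [forall i in B, (i <= j)%N].

Definition bin_size (s : 'I_n -> R) (B : {set 'I_n}) : R := \sum_(i in B) s i.

Definition is_solution (S : {set {set 'I_n}}) : bool :=
  partition S [set: 'I_n].

Definition feasible (s : 'I_n -> R) (S : {set {set 'I_n}}) : Prop :=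
  is_solution S /\
  forall B, B \in S -> forall j, is_max_item B j ->
    \sum_(i in B | i != j) s i < 1.

(* every exceeding item (the max-index item of a bin of total size >= 1)
   has size at least t *)
Definition exceeding_at_least (s : 'I_n -> R) (S : {set {set 'I_n}}) (t : R)
  : Prop :=
  forall B, B \in S -> 1 <= bin_size s B ->
    forall j, is_max_item B j -> t <= s j.

(* certificate (e_0, ..., e_k), k = 1/eps, all integers (e_0 = 0, e_k = n);
   indices here are 1-based: the ordinal j has index j+1. *)
Definition certificate (k : nat) (s : 'I_n -> R) (S : {set {set 'I_n}})
  (e : nat -> nat) : Prop :=
  [/\ e 0%N = 0%N, (0 < e 1%N)%N,
      (forall i, (1 <= i)%N -> (i < k)%N -> (e i <= e i.+1)%N),
      e k = n &
      forall B, B \in S -> ~ (bin_size s B < 1) ->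
        exists2 i : nat, (i <= k)%N &
          forall j, is_max_item B j ->
            (e i < j.+1)%N /\ forall l, l \in B -> l != j -> (l.+1 <= e i)%N].

(* nice solution, for eps = 1/k *)
Definition nice (k : nat) (s : 'I_n -> R) (S : {set {set 'I_n}}) : Prop :=
  feasible s S /\ exceeding_at_least s S ((k%:R)^-1 ^+ 2) /\
  exists e, certificate k s S e.

End OOEBP.

From HB Require Import structures.
From mathcomp Require Import all_boot all_order all_algebra.
Import Order.TTheory GRing.Theory Num.Theory.
Set Implicit Arguments. Unset Strict Implicit. Unset Printing Implicit Defensive.

(* Keep the bins of OPT' of total size below 1.  Every other bin is the union of
   its exceeding item and its body (the remaining items, of total size < 1).
   List the exceeding items by increasing index, t_0 < ... < t_(F-1), let
   g = F %/ k + 1, and form the new bins {t_r} U body(t_(r-g)), where a part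
   with an index out of range is empty.  A body lies below its own exceeding
   item, so t_r stays the last item of its new bin: the new solution is
   feasible and its exceeding items are exceeding items of OPT'.  Cutting the
   item sequence right after t_(g-1), t_(2g-1), ... gives a certificate,
   because each new bin has its body and its exceeding item on the two sides
   of the cut after t_(qg-1), q = r %/ g.  The F full bins of OPT' are replaced
   by at most F + g new bins, and g <= F/k + 1 <= opt'/k + 1. *)

Lemma card_ord_prefix n m : m <= n -> #|[set i : 'I_n | i < m]| = m.
Proof.
move=> le_mn; rewrite -sum1_card.
under eq_bigl do rewrite inE.
by rewrite (big_ord_narrow le_mn) sum1_card card_ord.
Qed.

Section Rank.
Variables (n : nat) (M : {set 'I_n}).

Definition rank (j : 'I_n) := #|[set i in M | i < j]|.

Lemma rank_le_card j : rank j <= #|M|.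
Proof. by apply/subset_leq_card/subsetP => i; rewrite inE => /andP[]. Qed.

Lemma rank_lt_card j : j \in M -> rank j < #|M|.
Proof.
move=> Mj; apply/proper_card/properP; split.
  by apply/subsetP => i; rewrite inE => /andP[].
by exists j; rewrite // inE ltnn andbF.
Qed.

Lemma leq_rank (i j : 'I_n) : i <= j -> rank i <= rank j.
Proof.
move=> le_ij; apply/subset_leq_card/subsetP => x; rewrite !inE.
by case/andP => -> /leq_trans ->.
Qed.

Lemma ltn_rank (i j : 'I_n) : i \in M -> i < j -> rank i < rank j.
Proof.
move=> Mi lt_ij; apply/proper_card/properP; split.
  by apply/subsetP => x; rewrite !inE => /andP[-> /ltn_trans ->].
by exists i; rewrite !inE ?Mi ?lt_ij ?ltnn ?andbF.
Qed.

Lemma rank_inj : {in M &, injective rank}.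
Proof.
move=> i j Mi Mj eq_r; apply: val_inj; case: (ltngtP i j) => // lt.
- by have := ltn_rank Mi lt; rewrite eq_r ltnn.
- by have := ltn_rank Mj lt; rewrite eq_r ltnn.
Qed.

Lemma rank_le j : rank j <= j.
Proof.
rewrite -[leqRHS](card_ord_prefix (ltnW (ltn_ord j))).
by apply/subset_leq_card/subsetP => i; rewrite !inE => /andP[].
Qed.

(* One past the index of the m-th element of M, or n if M has fewer than m
   elements. *)
Definition cut m := #|[set x : 'I_n | rank x < m]|.

Lemma cut0 : cut 0 = 0.
Proof. by apply: eq_card0 => x; rewrite inE. Qed.

Lemma leq_cut m p : m <= p -> cut m <= cut p.
Proof.
by move=> le_mp; apply/subset_leq_card/subsetP => x; rewrite !inE => /leq_trans->.
Qed.

Lemma cut_card m : #|M| < m -> cut m = n.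
Proof.
move=> lt_Mm; rewrite -[RHS]card_ord -cardsT; apply: eq_card => x.
by rewrite !inE (leq_ltn_trans (rank_le_card x)).
Qed.

Lemma cut_le m j : m <= rank j -> cut m <= j.
Proof.
move=> le_m_j; rewrite -[leqRHS](card_ord_prefix (ltnW (ltn_ord j))).
apply/subset_leq_card/subsetP => x; rewrite !inE.
apply: contraTT; rewrite -!leqNgt => le_jx.
exact: leq_trans le_m_j (leq_rank le_jx).
Qed.

Lemma lt_cut m y : rank y < m -> y < cut m.
Proof.
move=> lt_ym; rewrite -[y.+1](card_ord_prefix (ltn_ord y)).
apply/subset_leq_card/subsetP => x; rewrite !inE ltnS => le_xy.
exact: leq_ltn_trans (leq_rank le_xy) lt_ym.
Qed.

End Rank.

Lemma ler_sum_subpred (R : numDomainType) (I : Type) (r : seq I)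
    (P Q : pred I) (F : I -> R) :
  (forall i, Q i -> 0 <= F i)%R -> (forall i, P i -> Q i) ->
  (\sum_(i <- r | P i) F i <= \sum_(i <- r | Q i) F i)%R.
Proof.
move=> F_ge0 PQ; rewrite [leLHS]big_mkcond [leRHS]big_mkcond /=.
apply: ler_sum => i _; case: (boolP (P i)) => [/PQ -> //| _].
by case: ifP => // /F_ge0.
Qed.

Lemma is_max_item_uniq n (B : {set 'I_n}) i j :
  is_max_item B i -> is_max_item B j -> i = j.
Proof.
move=> /andP[Bi /forall_inP le_Bi] /andP[Bj /forall_inP le_Bj].
by apply/val_inj/eqP; rewrite eqn_leq le_Bj ?le_Bi.
Qed.

Lemma exists_max_item n (B : {set 'I_n}) x : x \in B -> exists j, is_max_item B j.
Proof.
move=> Bx; have [j Bj le_Bj] := @arg_maxnP _ x (mem B) val Bx.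
by exists j; apply/andP; split => //; apply/forall_inP => i /le_Bj.
Qed.

Section ShiftedSolution.
Variables (R : realFieldType) (n k : nat) (s : 'I_n -> R) (O : {set {set 'I_n}}).
Hypotheses (k_gt0 : 0 < k) (s_ge0 : forall i, (0 <= s i)%R)
  (O_feasible : feasible s O).

Implicit Types x y z i j : 'I_n.

Let O_partition : partition O [set: 'I_n]. Proof. by case: O_feasible. Qed.

Definition bin x := pblock O x.

Definition top x := [arg max_(j > x in bin x) j].

Lemma bin_in x : bin x \in O.
Proof. by case/and3P: O_partition => /eqP cover_O _ _; rewrite pblock_mem ?cover_O. Qed.

Lemma mem_bin x : x \in bin x.
Proof. by case/and3P: O_partition => /eqP cover_O _ _; rewrite mem_pblock cover_O. Qed.

Lemma bin_eq x y : y \in bin x -> bin y = bin x.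
Proof. by case/and3P: O_partition => _ triv_O _; apply: same_pblock. Qed.

Lemma top_max_item x : is_max_item (bin x) (top x).
Proof.
rewrite /top; case: arg_maxnP => [|j Bj le_Bj]; first exact: mem_bin.
by apply/andP; split => //; apply/forall_inP => i /le_Bj.
Qed.

Lemma top_mem x : top x \in bin x.
Proof. by case/andP: (top_max_item x). Qed.

Lemma bin_top x : bin (top x) = bin x.
Proof. exact/bin_eq/top_mem. Qed.

Lemma leq_top x : x <= top x.
Proof. by case/andP: (top_max_item x) => _ /forall_inP; apply; apply: mem_bin. Qed.

Lemma eq_top x y : bin x = bin y -> top x = top y.
Proof.
by move=> eq_xy; apply: is_max_item_uniq (top_max_item x) _; rewrite eq_xy top_max_item.
Qed.

Lemma top_id x : top (top x) = top x.
Proof. exact/eq_top/bin_top. Qed.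

Lemma ltn_top x : top x != x -> x < top x.
Proof. by rewrite ltn_neqAle leq_top andbT eq_sym. Qed.

Lemma sum_body_lt1 (P : pred 'I_n) :
  (forall i, P i -> top i != i) -> (forall i j, P i -> P j -> bin i = bin j) ->
  (\sum_(i | P i) s i < 1)%R.
Proof.
move=> body_P bin_P; case: (pickP P) => [y Py | P0]; last by rewrite big_pred0.
case: O_feasible => _ /(_ _ (bin_in y) _ (top_max_item y)) body_lt1.
apply: le_lt_trans body_lt1; apply: ler_sum_subpred => // i Pi.
by rewrite (bin_P _ _ Py Pi) mem_bin (eq_top (bin_P _ _ Py Pi)) eq_sym body_P.
Qed.

Definition full (B : {set 'I_n}) := (1 <= bin_size s B)%R.

Definition exceeding := [set j | full (bin j) && (top j == j)].

Definition shift := (#|exceeding| %/ k).+1.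

Definition level x :=
  if top x == x then rank exceeding x else rank exceeding (top x) + shift.

(* The new bins are the fibres of [label]: the level-r fibre is
   {t_r} U body(t_(r-shift)). *)
Definition label x : 'I_n + 'I_(shift + #|exceeding|) :=
  if full (bin x) then inr (inord (level x)) else inl (top x).

Definition new_bin x := [set y in [set: 'I_n] | label x == label y].

Definition shifted_solution := preim_partition label [set: 'I_n].

Lemma top_exceeding x : full (bin x) -> top x \in exceeding.
Proof. by move=> full_x; rewrite inE bin_top full_x top_id eqxx. Qed.

Lemma level_lt x : full (bin x) -> level x < shift + #|exceeding|.
Proof.
move=> full_x; rewrite /level; case: eqP => [top_x | _].
  by rewrite ltn_addl // rank_lt_card // inE full_x top_x eqxx.
by rewrite addnC ltn_add2l rank_lt_card // top_exceeding.
Qed.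

Lemma new_bin_not_full x y : ~~ full (bin x) -> y \in new_bin x -> y \in bin x.
Proof.
rewrite !inE /label => /negbTE ->; case: ifP => // _ /eqP [eq_top_xy].
by rewrite -(bin_top x) eq_top_xy bin_top mem_bin.
Qed.

Lemma new_bin_full x y :
  full (bin x) -> y \in new_bin x -> full (bin y) /\ level y = level x.
Proof.
rewrite !inE /label => full_x; rewrite full_x; case: ifP => // full_y /eqP [eq_xy].
by rewrite -(inordK (level_lt full_x)) eq_xy inordK ?level_lt.
Qed.

Lemma same_level_tops y z : full (bin y) -> full (bin z) -> level y = level z ->
  top y == y -> top z == z -> y = z.
Proof.
move=> full_y full_z + top_y top_z; rewrite /level top_y top_z.
by apply: rank_inj; rewrite inE ?full_y ?full_z ?top_y ?top_z.
Qed.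

Lemma same_level_bodies y z : full (bin y) -> full (bin z) -> level y = level z ->
  top y != y -> top z != z -> bin y = bin z.
Proof.
move=> full_y full_z + body_y body_z; rewrite /level (negbTE body_y) (negbTE body_z).
move/addIn/rank_inj; rewrite !top_exceeding // => /(_ isT isT) eq_top_yz.
by rewrite -bin_top eq_top_yz bin_top.
Qed.

Lemma same_level_body_lt_top y z : level y = level z ->
  top y == y -> top z != z -> z < y.
Proof.
move=> + top_y body_z; rewrite /level top_y (negbTE body_z) => rank_y.
apply: ltn_trans (ltn_top body_z) _; rewrite ltnNge.
apply/negP => /(leq_rank exceeding).
by rewrite rank_y -[leqRHS]addn0 leq_add2l.
Qed.

Section FullNewBin.
Variables x j : 'I_n.
Hypotheses (full_x : full (bin x)) (max_j : is_max_item (new_bin x) j).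

Let new_bin_same_level y z : y \in new_bin x -> z \in new_bin x ->
  [/\ full (bin y), full (bin z) & level y = level z].
Proof.
by move=> /(new_bin_full full_x)[? ->] /(new_bin_full full_x)[? ->].
Qed.

Lemma new_bin_others_body i : i \in new_bin x -> i != j -> top i != i.
Proof.
case/andP: max_j => new_j /forall_inP le_j new_i neq_ij; apply/negP => top_i.
have [full_i full_j eq_ij] := new_bin_same_level new_i new_j.
case: (boolP (top j == j)) => [top_j | body_j].
  by move: neq_ij; rewrite (same_level_tops full_i full_j eq_ij top_i top_j) eqxx.
by have := same_level_body_lt_top eq_ij top_i body_j; rewrite ltnNge le_j.
Qed.

Lemma new_bin_bodies i i' : i \in new_bin x -> i' \in new_bin x ->
  top i != i -> top i' != i' -> bin i = bin i'.
Proof.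
move=> new_i new_i'; have [full_i full_i' eq_ii'] := new_bin_same_level new_i new_i'.
exact: same_level_bodies.
Qed.

Lemma full_new_bin_max_top : full (new_bin x) -> top j == j.
Proof.
apply: contraTT => body_j; rewrite /full -ltNge.
have body i : i \in new_bin x -> top i != i.
  by move=> new_i; case: (eqVneq i j) => [-> // | ]; apply: new_bin_others_body.
apply: sum_body_lt1 => // i i' new_i new_i'.
exact: (new_bin_bodies new_i new_i' (body _ new_i) (body _ new_i')).
Qed.

End FullNewBin.

Lemma new_bin_lt1 x : ~~ full (bin x) -> (bin_size s (new_bin x) < 1)%R.
Proof.
move=> not_full_x; apply: (@le_lt_trans _ _ (bin_size s (bin x))); last by rewrite ltNge.
by apply: ler_sum_subpred => // i /(new_bin_not_full not_full_x).
Qed.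

Lemma new_bin_full_bin x : full (new_bin x) -> full (bin x).
Proof. by apply: contraTT => /new_bin_lt1; rewrite /full -ltNge. Qed.

Lemma new_bin_feasible x j :
  is_max_item (new_bin x) j -> (\sum_(i in new_bin x | i != j) s i < 1)%R.
Proof.
move=> max_j; have [full_x | /new_bin_lt1 new_lt1] := boolP (full (bin x)); last first.
  by apply: le_lt_trans new_lt1; apply: ler_sum_subpred => // i /andP[].
have body := new_bin_others_body full_x max_j.
apply: sum_body_lt1 => [i /andP[new_i ij] | i i' /andP[new_i ij] /andP[new_i' i'j]].
  exact: body new_i ij.
exact: (new_bin_bodies full_x new_i new_i' (body _ new_i ij) (body _ new_i' i'j)).
Qed.

Lemma shifted_solution_feasible : feasible s shifted_solution.
Proof.
split; first exact: preim_partitionP.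
by move=> _ /imsetP[x _ ->]; apply: new_bin_feasible.
Qed.

Lemma full_new_bin_max x j :
  full (new_bin x) -> is_max_item (new_bin x) j -> j \in exceeding.
Proof.
move=> full_new max_j; have full_x := new_bin_full_bin full_new.
have [new_j _] := andP max_j; have [full_j _] := new_bin_full full_x new_j.
by rewrite inE full_j (full_new_bin_max_top full_x max_j full_new).
Qed.

Lemma shifted_solution_exceeding t :
  exceeding_at_least s O t -> exceeding_at_least s shifted_solution t.
Proof.
move=> O_exceeding _ /imsetP[x _ ->] full_new j max_j.
have /[!inE] /andP[full_j /eqP top_j] := full_new_bin_max full_new max_j.
by apply: O_exceeding (bin_in j) full_j _ _; rewrite -{2}top_j top_max_item.
Qed.

Definition cert (i : nat) := cut exceeding (i * shift).

Lemma cert_new_bin x j : full (new_bin x) -> is_max_item (new_bin x) j ->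
  let q := rank exceeding j %/ shift in
  [/\ q <= k, cert q < j.+1 & forall l, l \in new_bin x -> l != j -> l.+1 <= cert q].
Proof.
move=> full_new max_j q; have full_x := new_bin_full_bin full_new.
have exc_j := full_new_bin_max full_new max_j.
have /[!inE] /andP[_ top_j] := exc_j; have [new_j _] := andP max_j.
split.
- rewrite ltnW // ltn_divLR // (leq_trans (rank_lt_card exc_j)) //.
  by rewrite mulnC ltnW // ltn_ceil.
- by rewrite ltnS cut_le // leq_divM.
move=> l new_l lj; have body_l := new_bin_others_body full_x max_j new_l lj.
have [_ level_l] := new_bin_full full_x new_l.
have [_ level_j] := new_bin_full full_x new_j.
move: level_l; rewrite -level_j /level top_j (negbTE body_l) => rank_l.
apply: lt_cut; apply: leq_ltn_trans (leq_rank _ (leq_top l)) _.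
by rewrite -(ltn_add2r shift) rank_l -mulSnr ltn_ceil.
Qed.

Lemma shifted_solution_certificate :
  0 < n -> certificate k s shifted_solution cert.
Proof.
move=> n_gt0; split.
- exact: cut0.
- have first_item : rank exceeding (Ordinal n_gt0) < 1 * shift.
    by rewrite mul1n (leq_ltn_trans (rank_le _ _)).
  exact: lt_cut first_item.
- by move=> i _ _; apply/leq_cut/leq_mul.
- by rewrite /cert cut_card // mulnC ltn_ceil.
move=> _ /imsetP[x _ ->] /negP; rewrite -leNgt => full_new.
have new_x : x \in new_bin x by rewrite !inE eqxx.
have [j max_j] := exists_max_item new_x.
have [le_ik cert_j cert_l] := cert_new_bin full_new max_j.
by exists (rank exceeding j %/ shift) => // j' /(is_max_item_uniq max_j) <-.
Qed.

Definition tops := [set j | top j == j].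

Lemma card_tops : #|tops| <= #|O|.
Proof.
rewrite -(@card_in_imset _ _ bin tops).
  by apply/subset_leq_card/subsetP => _ /imsetP[j _ ->]; apply: bin_in.
by move=> i j /[!inE] /eqP top_i /eqP top_j /eq_top; rewrite top_i top_j.
Qed.

Lemma card_exceeding_tops : #|exceeding| + #|tops :\: exceeding| = #|tops|.
Proof.
have exceeding_tops : exceeding \subset tops.
  by apply/subsetP => j; rewrite !inE => /andP[].
by rewrite -(cardsID exceeding tops) (setIidPr exceeding_tops).
Qed.

Lemma card_shifted_solution : #|shifted_solution| <= #|O| + shift.
Proof.
have -> : shifted_solution =
    (fun l => [set y in [set: 'I_n] | l == label y]) @: (label @: [set: 'I_n]).
  by rewrite -imset_comp.
apply: leq_trans (leq_imset_card _ _) _.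
have labels_sub : label @: [set: 'I_n] \subset
    inl @: (tops :\: exceeding) :|: inr @: [set: 'I_(shift + #|exceeding|)].
  apply/subsetP => _ /imsetP[x _ ->]; rewrite /label inE; case: ifP => full_x.
    by rewrite orbC imset_f ?inE.
  by rewrite imset_f // !inE top_id eqxx bin_top full_x.
apply: leq_trans (subset_leq_card labels_sub) _.
apply: leq_trans (leq_card_setU _ _).1 _.
rewrite !card_imset; [|exact: inr_inj|exact: inl_inj].
rewrite cardsT card_ord addnCA addnC leq_add2r addnC card_exceeding_tops.
exact: card_tops.
Qed.

Lemma shifted_solution_cost :
  (#|shifted_solution|%:R <= (1 + k%:R^-1) * #|O|%:R + k%:R :> R)%R.
Proof.
have card_exceeding : #|exceeding| <= #|O|.
  by apply: leq_trans card_tops; rewrite -card_exceeding_tops leq_addr.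
apply: (@le_trans _ _ (#|O| + shift)%:R%R).
  by rewrite ler_nat card_shifted_solution.
rewrite /shift -addn1 !natrD mulrDl mul1r -addrA lerD2l lerD ?ler1n //.
rewrite mulrC ler_pdivlMr ?ltr0n // -natrM ler_nat.
exact: leq_trans (leq_divM _ _) card_exceeding.
Qed.

End ShiftedSolution.

Local Open Scope ring_scope.

Theorem mainTheorem3 (R : realFieldType) (k n : nat) (s : 'I_n -> R)
    (OPT' : {set {set 'I_n}}) :
  (3 <= k)%N -> (0 < n)%N ->
  (forall i, 0 < s i /\ s i <= 1) ->
  feasible s OPT' ->
  exceeding_at_least s OPT' ((k%:R)^-1 ^+ 2) ->
  exists2 S : {set {set 'I_n}}, nice k s S &
    (#|S|%:R : R) <= (1 + (k%:R)^-1) * (#|OPT'|%:R) + k%:R.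
Proof.
move=> k_ge3 n_gt0 s_range O_feasible O_exceeding.
have k_gt0 : (0 < k)%N by apply: leq_trans k_ge3.
have s_ge0 i : 0 <= s i by have [/ltW] := s_range i.
exists (shifted_solution k s OPT'); last exact: shifted_solution_cost.
split; first exact: shifted_solution_feasible.
split; first exact: shifted_solution_exceeding.
by exists (cert k s OPT'); apply: shifted_solution_certificate.
Qed.
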